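(* Let $\lambda>0$, $L_x,L_y>0$, $K_x=L_x/\lambda$, $K_y=L_y/\lambda$, let $\alpha_1,\alpha_2\in[-1,1]$, let $C\neq 0$ be a complex constant, and let $P>0$, $\sigma^2>0$. Define, for $(\beta_1,\beta_2)\in[-1,1]^2$, $$H(\beta_1,\beta_2)=C\,\mathrm{sinc}\big(K_x\pi(\alpha_1-\beta_1)\big)\,\mathrm{sinc}\big(K_y\pi(\alpha_2-\beta_2)\big),\qquad \mu(\beta_1,\beta_2)=\big|\sqrt{P}\,H(\beta_1,\beta_2)\big|^2+\sigma^2 .$$ Let $(\beta_1^0,\beta_2^0)\in[-1,1]^2$ and let $v,w>0$ satisfy $K_xv\in\mathbb{N}$, $K_yw\in\mathbb{N}$, $|\beta_1^0\pm v|\le 1$ and $|\beta_2^0\pm w|\le 1$. Suppose the five values $\mu(\beta_1^0,\beta_2^0)$, $\mu(\beta_1^0+v,\beta_2^0)$, $\mu(\beta_1^0-v,\beta_2^0)$, $\mu(\beta_1^0,\beta_2^0+w)$, $\mu(\beta_1^0,\beta_2^0-w)$ are known. Define $$\alpha_1^{(1)/(2)}=\beta_1^0+\frac{v}{1\pm\sqrt{\left|\frac{\mu(\beta_1^0,\beta_2^0)-\sigma^2}{\mu(\beta_1^0+v,\beta_2^0)-\sigma^2}\right|}},\qquad \alpha_1^{(3)/(4)}=\beta_1^0-\frac{v}{1\pm\sqrt{\left|\frac{\mu(\beta_1^0,\beta_2^0)-\sigma^2}{\mu(\beta_1^0-v,\beta_2^0)-\sigma^2}\right|}},$$ $$\alpha_2^{(1)/(2)}=\beta_2^0+\frac{w}{1\pm\sqrt{\left|\frac{\mu(\beta_1^0,\beta_2^0)-\sigma^2}{\mu(\beta_1^0,\beta_2^0+w)-\sigma^2}\right|}},\qquad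 \alpha_2^{(3)/(4)}=\beta_2^0-\frac{w}{1\pm\sqrt{\left|\frac{\mu(\beta_1^0,\beta_2^0)-\sigma^2}{\mu(\beta_1^0,\beta_2^0-w)-\sigma^2}\right|}},$$ where the superscript $(1)$ (resp. $(3)$) corresponds to the sign $+$ and $(2)$ (resp. $(4)$) to the sign $-$ in the denominator. Then the maximizer $(\beta_1^*,\beta_2^* )=\arg\max_{(\beta_1,\beta_2)\in[-1,1]^2}\mu(\beta_1,\beta_2)$ is given by $$\beta_1^*=\frac{\alpha_1^{(i)}+\alpha_1^{(j)}}{2}\ \text{ where }(i,j)\in\{1,2\}\times\{3,4\}\text{ minimizes }|\alpha_1^{(i)}-\alpha_1^{(j)}|,$$ $$\beta_2^*=\frac{\alpha_2^{(i)}+\alpha_2^{(j)}}{2}\ \text{ where }(i,j)\in\{1,2\}\times\{3,4\}\text{ minimizes }|\alpha_2^{(i)}-\alpha_2^{(j)}|.$$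
   Context: $\mathrm{sinc}(x)=\sin(x)/x$ (with $\mathrm{sinc}(0)=1$) and $\mathbb{N}$ denotes the natural numbers. This models the far-field channel $H$ between a holographic metasurface transceiver of size $L_x\times L_y$ (carrier wavelength $\lambda$) and a user, where $(\beta_1,\beta_2)$ are the phase-shift parameters at the surface and $\alpha_1=\sin\theta\cos\phi$, $\alpha_2=\sin\theta\sin\phi$ encode the (unknown) user direction; $\mu(\beta_1,\beta_2)$ is the expected received power $\mathbb{E}|\sqrt{P}H(\beta_1,\beta_2)+\zeta|^2$ when a pilot of power $P$ is sent and $\zeta$ is zero-mean complex Gaussian noise of variance $\sigma^2$. *)

From Stdlib Require Import Reals Lra.
From Coquelicot Require Import Coquelicot.
Open Scope R_scope.

Definition sinc (x : R) : R :=
  if Req_EM_T x 0 then 1 else sin x / x.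

Definition chanH (lam Lx Ly a1 a2 : R) (Cc : C) (b1 b2 : R) : C :=
  (Cc * RtoC (sinc ((Lx / lam) * PI * (a1 - b1)) *
              sinc ((Ly / lam) * PI * (a2 - b2))))%C.

Definition mu (lam Lx Ly a1 a2 : R) (Cc : C) (P sigma2 : R) (b1 b2 : R) : R :=
  (Cmod (RtoC (sqrt P) * chanH lam Lx Ly a1 a2 Cc b1 b2)%C) ^ 2 + sigma2.

Definition sgn_of (b : bool) : R := if b then 1 else -1.

(* alpha^(1) (i = true, sign +) and alpha^(2) (i = false, sign -):
   b0 + v / (1 +- sqrt |(m0 - s2) / (m1 - s2)|) *)
Definition cand_plus (b0 v m0 m1 s2 : R) (i : bool) : R :=
  b0 + v / (1 + sgn_of i * sqrt (Rabs ((m0 - s2) / (m1 - s2)))).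

(* alpha^(3) (j = true, sign +) and alpha^(4) (j = false, sign -):
   b0 - v / (1 +- sqrt |(m0 - s2) / (m1 - s2)|) *)
Definition cand_minus (b0 v m0 m1 s2 : R) (j : bool) : R :=
  b0 - v / (1 + sgn_of j * sqrt (Rabs ((m0 - s2) / (m1 - s2)))).

(** Up to the noise floor, [mu] is [P |C|^2 sinc^2(Kx pi (a1 - b1)) sinc^2(Ky pi (a2 - b2))], and
    since [sinc^2 y <= 1] with equality only at [y = 0], its unique maximizer on the square is the
    user direction [(a1, a2)].  It remains to see that the closest-pair midpoints recover [a1] and
    [a2].  Fix one coordinate and put [x = K pi (a - b0)], [c = K v pi].  As [K v] is an integer,
    [sin^2 (x -/+ c) = sin^2 x], so the two probes [b0 +/- v] only change the [1/y^2] factor of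
    [sinc^2] and the measured square-rooted ratios are [|1 - t|] and [|1 + t|], with [t = c / x].
    Whatever the signs of [1 -/+ t], one candidate of each pair equals [b0 + v / t = a]; hence the
    closest pair has distance 0, and the equation it satisfies forces its common value to be [a]. *)
From Stdlib Require Import Reals Lra Psatz.
From Coquelicot Require Import Coquelicot.
Open Scope R_scope.

Lemma sinc_neq0 y : y <> 0 -> sinc y = sin y / y.
Proof. intro Hy. unfold sinc. destruct (Req_EM_T y 0); [contradiction | reflexivity]. Qed.

Lemma sinc0 : sinc 0 = 1.
Proof. unfold sinc. destruct (Req_EM_T 0 0); [reflexivity | congruence]. Qed.

Lemma sin_sq_add_nat_PI (n : nat) x : sin (x + INR n * PI) ^ 2 = sin x ^ 2.
Proof.
  induction n as [|n IH].
  - simpl INR. rewrite Rmult_0_l, Rplus_0_r. reflexivity.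
  - rewrite S_INR.
    replace (x + (INR n + 1) * PI) with (x + INR n * PI + PI) by ring.
    rewrite neg_sin, <- IH. ring.
Qed.

Lemma sin_sq_sub_nat_PI (n : nat) x : sin (x - INR n * PI) ^ 2 = sin x ^ 2.
Proof.
  rewrite <- (sin_sq_add_nat_PI n (x - INR n * PI)).
  f_equal. f_equal. ring.
Qed.

Lemma Rabs_sin_lt y : y <> 0 -> Rabs (sin y) < Rabs y.
Proof.
  assert (Hpos : forall z, 0 < z -> Rabs (sin z) < z).
  { intros z Hz. pose proof (sin_lt_x z Hz). pose proof (SIN_bound z).
    pose proof PI2_1. pose proof PI2_Rlt_PI.
    apply Rabs_def1; [lra |].
    destruct (Rle_dec z 1); [pose proof (sin_gt_0 z Hz ltac:(lra)) |]; lra. }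
  intro Hy. destruct (Rlt_dec 0 y) as [Hy0 | Hy0].
  - rewrite (Rabs_pos_eq y) by lra. now apply Hpos.
  - rewrite <- Rabs_Ropp, <- sin_neg, <- (Rabs_Ropp y), (Rabs_pos_eq (- y)) by lra.
    apply Hpos. lra.
Qed.

Lemma sinc_sq_lt1 y : y <> 0 -> sinc y ^ 2 < 1.
Proof.
  intro Hy. rewrite sinc_neq0 by exact Hy.
  pose proof (Rabs_sin_lt y Hy) as Hlt.
  assert (Hsq : sin y ^ 2 < y ^ 2).
  { rewrite <- (pow2_abs (sin y)), <- (pow2_abs y).
    pose proof (Rabs_pos (sin y)). nra. }
  assert (Hy2 : 0 < y ^ 2) by (apply pow2_gt_0; exact Hy).
  replace ((sin y / y) ^ 2) with (sin y ^ 2 / y ^ 2) by (field; exact Hy).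
  apply (Rmult_lt_reg_r (y ^ 2)); [exact Hy2 |].
  unfold Rdiv. rewrite Rmult_assoc, Rinv_l by lra. lra.
Qed.

Lemma sinc_sq_le1 y : sinc y ^ 2 <= 1.
Proof.
  destruct (Req_EM_T y 0) as [-> | Hy].
  - rewrite sinc0. lra.
  - apply Rlt_le, sinc_sq_lt1, Hy.
Qed.

Lemma sinc_sq_eq1 y : sinc y ^ 2 = 1 -> y = 0.
Proof.
  intro H1. destruct (Req_EM_T y 0) as [Hy | Hy]; [exact Hy |].
  pose proof (sinc_sq_lt1 y Hy). lra.
Qed.

Lemma sinc_sq_mul_sq y : sinc y ^ 2 * y ^ 2 = sin y ^ 2.
Proof.
  destruct (Req_EM_T y 0) as [-> | Hy].
  - rewrite sin_0. ring.
  - rewrite sinc_neq0 by exact Hy. field. exact Hy.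
Qed.

Lemma sqrt_sinc_sq_ratio E x d : x <> 0 -> sin d ^ 2 = sin x ^ 2 -> E * sinc d ^ 2 <> 0 ->
  sqrt (Rabs (E * sinc x ^ 2 / (E * sinc d ^ 2))) = Rabs (d / x).
Proof.
  intros Hx Hs Hn.
  assert (HE : E <> 0) by (intros ->; apply Hn; ring).
  assert (Hsd : sinc d <> 0) by (intro Hz; apply Hn; rewrite Hz; ring).
  assert (Hratio : E * sinc x ^ 2 / (E * sinc d ^ 2) = (d / x) ^ 2).
  { replace (sinc x ^ 2) with (sinc d ^ 2 * d ^ 2 / x ^ 2)
      by (rewrite sinc_sq_mul_sq, Hs, <- sinc_sq_mul_sq; field; exact Hx).
    field. repeat split; assumption. }
  rewrite Hratio, (Rabs_pos_eq ((d / x) ^ 2)) by apply pow2_ge_0.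
  rewrite <- pow2_abs. apply sqrt_pow2, Rabs_pos.
Qed.

Lemma mu_sinc_sq lam Lx Ly a1 a2 Cc P s2 b1 b2 : 0 <= P ->
  mu lam Lx Ly a1 a2 Cc P s2 b1 b2 =
  P * Cmod Cc ^ 2 * (sinc (Lx / lam * PI * (a1 - b1)) ^ 2 * sinc (Ly / lam * PI * (a2 - b2)) ^ 2)
  + s2.
Proof.
  intro HP. unfold mu, chanH. rewrite !Cmod_mult, !Cmod_R.
  rewrite !Rpow_mult_distr, !pow2_abs, pow2_sqrt by exact HP.
  ring.
Qed.

Lemma one_add_sgn_abs u i : 1 + sgn_of i * Rabs u = 1 + u \/ 1 + sgn_of i * Rabs u = 1 - u.
Proof. destruct i; unfold sgn_of, Rabs; destruct (Rcase_abs u); lra. Qed.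

Lemma one_add_sgn_abs_eq u : exists i, 1 + sgn_of i * Rabs u = 1 - u.
Proof.
  unfold Rabs; destruct (Rcase_abs u); [exists true | exists false]; unfold sgn_of; lra.
Qed.

Lemma one_add_sgn_abs_neq0 u i : Rabs u <> 1 -> 1 + sgn_of i * Rabs u <> 0.
Proof. pose proof (Rabs_pos u). destruct i; unfold sgn_of; lra. Qed.

Lemma closest_pair_eq {I J : Type} (f : I -> R) (g : J -> R) i j :
  (exists i0 j0, f i0 = g j0) ->
  (forall i' j', Rabs (f i - g j) <= Rabs (f i' - g j')) -> f i = g j.
Proof.
  intros [i0 [j0 Hmeet]] Hmin.
  specialize (Hmin i0 j0). rewrite Hmeet, Rminus_diag, Rabs_R0 in Hmin.
  apply Rminus_diag_uniq, Rabs_eq_0. pose proof (Rabs_pos (f i - g j)). lra.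
Qed.

Lemma closest_candidates_mid (b0 v t : R) :
  0 < v -> t <> 0 -> Rabs (1 - t) <> 1 -> Rabs (1 + t) <> 1 ->
  let ap i := b0 + v / (1 + sgn_of i * Rabs (1 - t)) in
  let am j := b0 - v / (1 + sgn_of j * Rabs (1 + t)) in
  forall i j, (forall i' j', Rabs (ap i - am j) <= Rabs (ap i' - am j')) ->
  (ap i + am j) / 2 = b0 + v / t.
Proof.
  intros Hv Ht Hm Hp ap am i j Hmin.
  assert (Hmeet : ap i = am j).
  { apply (closest_pair_eq ap am i j); [| exact Hmin].
    destruct (one_add_sgn_abs_eq (1 - t)) as [i0 Hi0].
    destruct (one_add_sgn_abs_eq (1 + t)) as [j0 Hj0].
    exists i0, j0. unfold ap, am. rewrite Hi0, Hj0.
    field. split; lra. }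
  set (D := 1 + sgn_of i * Rabs (1 - t)).
  set (E := 1 + sgn_of j * Rabs (1 + t)).
  assert (HD : D <> 0) by apply one_add_sgn_abs_neq0, Hm.
  assert (HE : E <> 0) by apply one_add_sgn_abs_neq0, Hp.
  assert (HDE : D + E = 0).
  { assert (Hprod : v * (D + E) = (ap i - am j) * (D * E)) by (unfold ap, am; fold D E; field; auto).
    rewrite Hmeet, Rminus_diag, Rmult_0_l in Hprod.
    destruct (Rmult_integral _ _ Hprod); lra. }
  assert (HDt : D = t).
  { pose proof (one_add_sgn_abs (1 - t) i) as HDc. pose proof (one_add_sgn_abs (1 + t) j) as HEc.
    fold D in HDc. fold E in HEc. lra. }
  rewrite <- Hmeet. unfold ap. fold D. rewrite HDt. field. exact Ht.
Qed.

Lemma sinc_sq_probe_ratios (K a b0 v E s2 : R) (f : R -> R) (n : nat) :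
  0 < K -> 0 < v -> K * v = INR n ->
  (forall b, f b = E * sinc (K * PI * (a - b)) ^ 2 + s2) ->
  f (b0 + v) - s2 <> 0 -> f (b0 - v) - s2 <> 0 ->
  exists t, t <> 0 /\ a = b0 + v / t /\
    sqrt (Rabs ((f b0 - s2) / (f (b0 + v) - s2))) = Rabs (1 - t) /\
    sqrt (Rabs ((f b0 - s2) / (f (b0 - v) - s2))) = Rabs (1 + t).
Proof.
  intros HK Hv Hn Hf Hp Hm.
  set (x := K * PI * (a - b0)).
  set (c := INR n * PI).
  pose proof PI_RGT_0.
  assert (Hc : 0 < c) by (unfold c; rewrite <- Hn; apply Rmult_lt_0_compat; nra).
  assert (Hf0 : f b0 - s2 = E * sinc x ^ 2) by (rewrite Hf; unfold x; ring).
  assert (Hfp : f (b0 + v) - s2 = E * sinc (x - c) ^ 2).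
  { rewrite Hf. replace (K * PI * (a - (b0 + v))) with (x - c); [ring |].
    unfold x, c. rewrite <- Hn. ring. }
  assert (Hfm : f (b0 - v) - s2 = E * sinc (x + c) ^ 2).
  { rewrite Hf. replace (K * PI * (a - (b0 - v))) with (x + c); [ring |].
    unfold x, c. rewrite <- Hn. ring. }
  rewrite Hfp in Hp. rewrite Hfm in Hm.
  assert (Hx : x <> 0).
  { intro Hx0. apply Hp.
    assert (Hsc : sinc (x - c) ^ 2 * (x - c) ^ 2 = 0)
      by (rewrite sinc_sq_mul_sq; unfold c; rewrite sin_sq_sub_nat_PI, Hx0, sin_0; ring).
    apply Rmult_integral in Hsc as [Hz | Hz]; [rewrite Hz; ring |].
    exfalso. revert Hz. apply pow_nonzero. lra. }
  exists (c / x). repeat split.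
  - unfold Rdiv. apply Rmult_integral_contrapositive_currified; [lra |].
    apply Rinv_neq_0_compat, Hx.
  - assert (a - b0 <> 0) by (intro Z; apply Hx; unfold x; rewrite Z; ring).
    unfold x, c. rewrite <- Hn. field. repeat split; lra.
  - rewrite Hf0, Hfp, sqrt_sinc_sq_ratio by (try apply sin_sq_sub_nat_PI; assumption).
    f_equal. field. exact Hx.
  - rewrite Hf0, Hfm, sqrt_sinc_sq_ratio by (try apply sin_sq_add_nat_PI; assumption).
    f_equal. field. exact Hx.
Qed.

Lemma closest_candidates_mid_sinc_sq (K a b0 v E s2 : R) (f : R -> R) (n : nat) :
  0 < K -> 0 < v -> K * v = INR n ->
  (forall b, f b = E * sinc (K * PI * (a - b)) ^ 2 + s2) ->
  f (b0 + v) - s2 <> 0 -> f (b0 - v) - s2 <> 0 ->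
  sqrt (Rabs ((f b0 - s2) / (f (b0 + v) - s2))) <> 1 ->
  sqrt (Rabs ((f b0 - s2) / (f (b0 - v) - s2))) <> 1 ->
  forall i j : bool,
  (forall i' j' : bool,
     Rabs (cand_plus b0 v (f b0) (f (b0 + v)) s2 i - cand_minus b0 v (f b0) (f (b0 - v)) s2 j)
     <= Rabs (cand_plus b0 v (f b0) (f (b0 + v)) s2 i' - cand_minus b0 v (f b0) (f (b0 - v)) s2 j')) ->
  (cand_plus b0 v (f b0) (f (b0 + v)) s2 i + cand_minus b0 v (f b0) (f (b0 - v)) s2 j) / 2 = a.
Proof.
  intros HK Hv Hn Hf Hp Hm Sp1 Sm1 i j Hmin.
  destruct (sinc_sq_probe_ratios K a b0 v E s2 f n HK Hv Hn Hf Hp Hm) as (t & Ht & Ha & Sp & Sm).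
  unfold cand_plus, cand_minus in *. rewrite Sp, Sm in *. rewrite Ha.
  apply closest_candidates_mid; assumption.
Qed.

Lemma sinc_sq_prod_peak (G K1 K2 a1 a2 s2 b1 b2 : R) : 0 < G -> K1 <> 0 -> K2 <> 0 ->
  let g u1 u2 := G * (sinc (K1 * PI * (a1 - u1)) ^ 2 * sinc (K2 * PI * (a2 - u2)) ^ 2) + s2 in
  g b1 b2 <= g a1 a2 /\ (g b1 b2 = g a1 a2 -> b1 = a1 /\ b2 = a2).
Proof.
  intros HG HK1 HK2 g. unfold g. rewrite !Rminus_diag, !Rmult_0_r, sinc0, pow1, Rmult_1_r.
  pose proof PI_neq0.
  set (p := sinc (K1 * PI * (a1 - b1)) ^ 2).
  set (q := sinc (K2 * PI * (a2 - b2)) ^ 2).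
  assert (Hp : 0 <= p <= 1) by (split; [apply pow2_ge_0 | apply sinc_sq_le1]).
  assert (Hq : 0 <= q <= 1) by (split; [apply pow2_ge_0 | apply sinc_sq_le1]).
  assert (Hpq : p * q <= 1) by nra.
  split; [nra |].
  intro Heq.
  assert (Hpq1 : p * q = 1) by nra.
  assert (Hp1 : p = 1) by nra.
  assert (Hq1 : q = 1) by nra.
  apply sinc_sq_eq1, Rmult_integral in Hp1 as [Hp1 | Hp1];
    [apply Rmult_integral in Hp1 as [|]; contradiction |].
  apply sinc_sq_eq1, Rmult_integral in Hq1 as [Hq1 | Hq1];
    [apply Rmult_integral in Hq1 as [|]; contradiction |].
  split; lra.
Qed.

Theorem theorem1 (lam Lx Ly a1 a2 : R) (Cc : C) (P s2 b10 b20 v w : R) :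
  0 < lam -> 0 < Lx -> 0 < Ly ->
  -1 <= a1 <= 1 -> -1 <= a2 <= 1 ->
  Cc <> 0%C -> 0 < P -> 0 < s2 ->
  -1 <= b10 <= 1 -> -1 <= b20 <= 1 ->
  0 < v -> 0 < w ->
  (exists n : nat, (Lx / lam) * v = INR n) ->
  (exists n : nat, (Ly / lam) * w = INR n) ->
  Rabs (b10 + v) <= 1 -> Rabs (b10 - v) <= 1 ->
  Rabs (b20 + w) <= 1 -> Rabs (b20 - w) <= 1 ->
  let mu := mu lam Lx Ly a1 a2 Cc P s2 in
  let m0 := mu b10 b20 in
  let m1p := mu (b10 + v) b20 in
  let m1m := mu (b10 - v) b20 in
  let m2p := mu b10 (b20 + w) in
  let m2m := mu b10 (b20 - w) in
  (* well-definedness of the formulas (all denominators nonzero) *)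
  m1p - s2 <> 0 -> m1m - s2 <> 0 -> m2p - s2 <> 0 -> m2m - s2 <> 0 ->
  sqrt (Rabs ((m0 - s2) / (m1p - s2))) <> 1 ->
  sqrt (Rabs ((m0 - s2) / (m1m - s2))) <> 1 ->
  sqrt (Rabs ((m0 - s2) / (m2p - s2))) <> 1 ->
  sqrt (Rabs ((m0 - s2) / (m2m - s2))) <> 1 ->
  let A1p := cand_plus b10 v m0 m1p s2 in   (* alpha_1^(1) / alpha_1^(2) *)
  let A1m := cand_minus b10 v m0 m1m s2 in  (* alpha_1^(3) / alpha_1^(4) *)
  let A2p := cand_plus b20 w m0 m2p s2 in
  let A2m := cand_minus b20 w m0 m2m s2 in
  forall i j k l : bool,
    (forall i' j' : bool, Rabs (A1p i - A1m j) <= Rabs (A1p i' - A1m j')) ->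
    (forall k' l' : bool, Rabs (A2p k - A2m l) <= Rabs (A2p k' - A2m l')) ->
    let bs1 := (A1p i + A1m j) / 2 in
    let bs2 := (A2p k + A2m l) / 2 in
    (-1 <= bs1 <= 1 /\ -1 <= bs2 <= 1) /\
    (forall b1 b2 : R, -1 <= b1 <= 1 -> -1 <= b2 <= 1 ->
       mu b1 b2 <= mu bs1 bs2 /\
       (mu b1 b2 = mu bs1 bs2 -> b1 = bs1 /\ b2 = bs2)).
Proof.
  intros Hlam HLx HLy Ha1 Ha2 HC HP _ _ _ Hv Hw [n1 Hn1] [n2 Hn2] _ _ _ _
    mu0 m0 m1p m1m m2p m2m Hd1 Hd2 Hd3 Hd4 Hq1 Hq2 Hq3 Hq4 A1p A1m A2p A2m i j k l Hmin1 Hmin2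
    bs1 bs2.
  assert (HK1 : 0 < Lx / lam) by (apply Rdiv_lt_0_compat; assumption).
  assert (HK2 : 0 < Ly / lam) by (apply Rdiv_lt_0_compat; assumption).
  set (G := P * Cmod Cc ^ 2).
  assert (HG : 0 < G) by (apply Rmult_lt_0_compat; [| apply pow_lt, Cmod_gt_0]; assumption).
  assert (Hmu : forall b1 b2, mu0 b1 b2 =
    G * (sinc (Lx / lam * PI * (a1 - b1)) ^ 2 * sinc (Ly / lam * PI * (a2 - b2)) ^ 2) + s2)
    by (intros; apply mu_sinc_sq; lra).
  assert (Hbs1 : bs1 = a1).
  { apply (closest_candidates_mid_sinc_sq (Lx / lam) a1 b10 v
             (G * sinc (Ly / lam * PI * (a2 - b20)) ^ 2) s2 (fun b => mu0 b b20) n1); auto.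
    intro b. rewrite Hmu. ring. }
  assert (Hbs2 : bs2 = a2).
  { apply (closest_candidates_mid_sinc_sq (Ly / lam) a2 b20 w
             (G * sinc (Lx / lam * PI * (a1 - b10)) ^ 2) s2 (fun b => mu0 b10 b) n2); auto.
    intro b. rewrite Hmu. ring. }
  rewrite Hbs1, Hbs2. split; [split; assumption |].
  intros b1 b2 _ _. rewrite !Hmu.
  apply sinc_sq_prod_peak; [assumption | lra | lra].
Qed.
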